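(* Let $\mathcal{A},\mathcal{B}\in\operatorname{Sym}(k,\mathbb{R})$ with $\mathcal{A}$ positive definite, let $\xi\in\mathbb{R}^k$, and put $f(x)={}^tx\mathcal{A}x-1$, $g(x)={}^tx\mathcal{B}x+\xi\cdot x-1$. Suppose that for all $x\in\mathbb{R}^k$, $f(x)\le0$ implies $g(x)\le0$. Then $\operatorname{tr}\mathcal{A}\ge\operatorname{tr}\mathcal{B}$; moreover, either $f=g$ or $\operatorname{tr}\mathcal{A}>\operatorname{tr}\mathcal{B}$. *)

From mathcomp Require Import all_boot all_order all_algebra.
From mathcomp Require Import reals.
Set Implicit Arguments. Unset Strict Implicit. Unset Printing Implicit Defensive.
Import Order.TTheory GRing.Theory Num.Theory.
Local Open Scope ring_scope.

Definition qform {R : ringType} {k : nat} (M : 'M[R]_k) (x : 'rV[R]_k) : R :=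
  (x *m M *m x^T) 0 0.

Definition dotv {R : ringType} {k : nat} (xi x : 'rV[R]_k) : R :=
  (xi *m x^T) 0 0.

Definition symmetric_mx {R : ringType} {k : nat} (M : 'M[R]_k) : Prop :=
  M^T = M.

Definition posdef_mx {R : numDomainType} {k : nat} (M : 'M[R]_k) : Prop :=
  symmetric_mx M /\ forall x : 'rV[R]_k, x != 0 -> 0 < qform M x.

From mathcomp Require Import all_boot all_order all_algebra.
From mathcomp Require Import reals ring lra.
From Stdlib Require Import FunctionalExtensionality.
Set Implicit Arguments. Unset Strict Implicit. Unset Printing Implicit Defensive.
Import Order.TTheory GRing.Theory Num.Theory.
Local Open Scope ring_scope.

(* Testing the containment at the two points where the line through x meets
   the ellipsoid f = 0 gives ^tx B x + sqrt(^tx A x) |xi . x| <= ^tx A x.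
   Hence A - B is positive semidefinite, so its diagonal and its trace are
   nonnegative.  A symmetric semidefinite matrix of trace zero vanishes, and
   once A = B the same inequality forces xi . x = 0. *)

Section QuadraticForms.
Variables (R : comNzRingType) (k : nat).
Implicit Types (M N : 'M[R]_k) (x xi : 'rV[R]_k).

Lemma qform0 M : qform M 0 = 0.
Proof. by rewrite /qform !mul0mx mxE. Qed.

Lemma dotv0 xi : dotv xi 0 = 0.
Proof. by rewrite /dotv trmx0 mulmx0 mxE. Qed.

Lemma qformZ M c x : qform M (c *: x) = c ^+ 2 * qform M x.
Proof. by rewrite /qform linearZ /= -scalemxAr -!scalemxAl !mxE mulrA -expr2. Qed.

Lemma dotvZ xi c x : dotv xi (c *: x) = c * dotv xi x.
Proof. by rewrite /dotv linearZ /= -scalemxAr mxE. Qed.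

Lemma qformB M N x : qform (M - N) x = qform M x - qform N x.
Proof. by rewrite /qform mulmxBr mulmxBl !mxE. Qed.

Lemma qform_delta M i : qform M (delta_mx 0 i) = M i i.
Proof. by rewrite /qform -rowE trmx_delta -colE !mxE. Qed.

Lemma qform_deltaD M i j c :
  qform M (delta_mx 0 i + c *: delta_mx 0 j) =
  M i i + c * (M i j + M j i) + c ^+ 2 * M j j.
Proof.
rewrite /qform linearD linearZ /= !trmx_delta !(mulmxDl, mulmxDr).
by rewrite -!scalemxAr -!scalemxAl -!rowE -!colE !mxE; ring.
Qed.

End QuadraticForms.

Section SemidefiniteMatrices.
Variables (R : realDomainType) (k : nat) (M : 'M[R]_k).
Hypotheses (symM : symmetric_mx M) (psdM : forall x : 'rV[R]_k, 0 <= qform M x).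

Lemma psd_diag_ge0 i : 0 <= M i i.
Proof. by rewrite -qform_delta. Qed.

Lemma psd_mxtrace_ge0 : 0 <= \tr M.
Proof. by apply: sumr_ge0 => i _; apply: psd_diag_ge0. Qed.

(* Testing M on e_i - M_ij e_j gives -2 M_ij^2 once the diagonal vanishes. *)
Lemma psd_mxtrace_eq0 : \tr M = 0 -> M = 0.
Proof.
move=> trM0; have diag0 i : M i i = 0.
  by apply: (psumr_eq0P _ trM0) => // j _; apply: psd_diag_ge0.
apply/matrixP => i j; rewrite mxE; set c := M i j.
have Mji : M j i = c by rewrite /c -{1}symM mxE.
have := psdM (delta_mx 0 i + (- c) *: delta_mx 0 j).
rewrite qform_deltaD !diag0 Mji -/c mulr0 addr0 add0r => h.
have : c * c <= 0 by nra.
by rewrite -expr2 le_eqVlt ltNge sqr_ge0 orbF sqrf_eq0 => /eqP.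
Qed.

End SemidefiniteMatrices.

Section EllipsoidContainment.
Variables (R : rcfType) (k : nat) (A B : 'M[R]_k) (xi : 'rV[R]_k).
Hypotheses (posA : forall x : 'rV[R]_k, x != 0 -> 0 < qform A x)
  (contained : forall x : 'rV[R]_k,
     qform A x - 1 <= 0 -> qform B x + dotv xi x - 1 <= 0).

(* Test the containment at the two boundary points +-x / sqrt(qform A x). *)
Lemma qform_sub_ge_dotv x :
  Num.sqrt (qform A x) * `|dotv xi x| <= qform (A - B) x.
Proof.
rewrite qformB; have [->|x0] := eqVneq x 0.
  by rewrite !qform0 dotv0 normr0 mulr0 subrr.
have q0 := posA x0; set q := qform A x in q0 *; set s := Num.sqrt q.
have s0 : 0 < s by rewrite sqrtr_gt0.
have s2 : s ^+ 2 = q by rewrite sqr_sqrtr // ltW.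
have boundary e : e ^+ 2 = 1 -> qform B x + e * s * dotv xi x <= q.
  move=> e2; have unit : (e / s) ^+ 2 * q = 1.
    by rewrite -s2 expr_div_n e2 mul1r mulVf // sqrf_eq0 gt_eqF.
  have := @contained (e / s *: x).
  rewrite !qformZ dotvZ -/q unit subrr lexx subr_le0 => /(_ isT) h.
  have -> : qform B x + e * s * dotv xi x =
      q * ((e / s) ^+ 2 * qform B x + e / s * dotv xi x).
    by rewrite -s2 expr_div_n e2; field; rewrite gt_eqF.
  by rewrite -[leRHS]mulr1 ler_pM2l.
have hp := boundary 1 (expr1n _ _).
have hm := boundary (-1) (etrans (sqrrN 1) (expr1n _ _)).
rewrite -(ger0_norm (ltW s0)) -normrM ler_norml; apply/andP; split; lra.
Qed.

Lemma dotv_eq0_of_eq_forms : A = B -> forall x, dotv xi x = 0.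
Proof.
move=> eqAB x; have [->|x0] := eqVneq x 0; first exact: dotv0.
have := @qform_sub_ge_dotv x; rewrite eqAB qformB subrr.
rewrite pmulr_rle0 ?normr_le0 => [/eqP //|].
by rewrite sqrtr_gt0 -eqAB posA.
Qed.

End EllipsoidContainment.

Theorem lemma2p3 (R : realType) (k : nat) (A B : 'M[R]_k) (xi : 'rV[R]_k) :
  symmetric_mx A -> symmetric_mx B -> posdef_mx A ->
  (forall x : 'rV[R]_k, qform A x - 1 <= 0 -> qform B x + dotv xi x - 1 <= 0) ->
  \tr B <= \tr A /\
  ((fun x : 'rV[R]_k => qform A x - 1) = (fun x => qform B x + dotv xi x - 1)
   \/ \tr B < \tr A).
Proof.
move=> symA symB [_ posA] contained.
have symAB : symmetric_mx (A - B) by rewrite /symmetric_mx linearB /= symA symB.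
have psdAB x : 0 <= qform (A - B) x.
  apply: le_trans (qform_sub_ge_dotv posA contained x).
  by rewrite mulr_ge0 ?sqrtr_ge0.
have trAB : \tr (A - B) = \tr A - \tr B by rewrite linearB.
have leBA : \tr B <= \tr A by rewrite -subr_ge0 -trAB psd_mxtrace_ge0.
split=> //; have [|geBA] := ltP (\tr B) (\tr A); [by right | left].
have eqAB : A = B.
  apply/eqP; rewrite -subr_eq0; apply/eqP; apply: psd_mxtrace_eq0 => //.
  by apply/eqP; rewrite trAB subr_eq0 eq_le leBA geBA.
apply: functional_extensionality => x.
by rewrite (dotv_eq0_of_eq_forms posA contained eqAB) addr0 eqAB.
Qed.
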